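(* Let $lc_n$ be the number of linked cycles on $[n]$. Then $lc_1=1$, $lc_2=2$, and for all $n\ge3$, $$lc_n=(2n-3)lc_{n-1}+lc_{n-2}.$$
   Context: Two finite sets of integers $E,F$ are nearly disjoint if for every $i\in E\cap F$ either ($i=\min(E)$, $|E|>1$, $i\ne\min(F)$) or ($i=\min(F)$, $|F|>1$, $i\ne\min(E)$). A linked partition of $[n]$ is a set of nonempty subsets (blocks) of $[n]$ with union $[n]$, any two distinct blocks nearly disjoint. A linked cycle on $[n]$ is a linked partition of $[n]$ together with a cyclic arrangement of the elements of each block. *)

(* [n] = {1,...,n} is represented by 'I_n = {0,...,n-1}
   (order-preserving relabelling i |-> i+1, so minima are preserved). *)
From mathcomp Require Import all_boot all_fingroup.
Set Implicit Arguments. Unset Strict Implicit. Unset Printing Implicit Defensive.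

Section LinkedCycles.
Variable n : nat.
Local Notation T := 'I_n.

Definition is_min (i : T) (E : {set T}) : bool :=
  (i \in E) && [forall j in E, i <= j].

Definition nearly_disjoint (E F : {set T}) : bool :=
  [forall i in E :&: F,
     [&& is_min i E, 1 < #|E| & ~~ is_min i F] ||
     [&& is_min i F, 1 < #|F| & ~~ is_min i E]].

Definition linked_partition (P : {set {set T}}) : bool :=
  [&& set0 \notin P,
      \bigcup_(B in P) B == [set: T] &
      [forall E in P, forall F in P, (E != F) ==> nearly_disjoint E F]].

(* a cyclic arrangement of the (nonempty) block B, encoded as a permutation
   of [n] fixing everything outside B and acting as one cycle on B *)
Definition cyclic_arrangement (B : {set T}) (s : {perm T}) : bool :=
  [forall x, (x \notin B) ==> (s x == x)] &&
  [forall x in B, forall y in B, y \in porbit s x].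

Definition linked_cycle (P : {set {set T}}) (c : {ffun {set T} -> {perm T}})
  : bool :=
  linked_partition P &&
  [forall B, if B \in P then cyclic_arrangement B (c B) else c B == 1%g].

End LinkedCycles.

Definition lc (n : nat) : nat :=
  #|[set x : {set {set 'I_n}} * {ffun {set 'I_n} -> {perm 'I_n}}
        | linked_cycle x.1 x.2]|.

(* Every linked cycle on [k+1] arises in exactly one way from a linked cycle pi
   on [k] by placing the new largest element z: as a singleton block {z}, or
   right after some a < z in a cycle -- either in the block whose minimum is a
   (the new block {a, z} if there is none) or in the block in which a is not the
   minimum.  Calling "children" the elements that are not the minimum of their
   block, pi has thus 1 + k + c(pi) extensions, c(pi) being its number of
   children, and every extension but the first one adds z to the children.
   Hence the polynomials Q_k = sum_pi x^c(pi) satisfy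
   Q_(k+1) = (1 + k x) Q_k + x^2 Q_k', whence the three-term recurrence
   Q_(k+2) = (2k+1) x Q_(k+1) + Q_k of Bessel polynomials; evaluate at x = 1. *)

From mathcomp Require Import all_boot all_fingroup ssralg ssrnum ssrint poly ring.
Set Implicit Arguments. Unset Strict Implicit. Unset Printing Implicit Defensive.
Import GRing.Theory Num.Theory.

Section CyclicArrangement.
Variable n : nat.
Local Notation T := 'I_n.
Implicit Types (B : {set T}) (s : {perm T}) (x y z a : T).
Local Open Scope group_scope.

Lemma cyclic_arrangementP B s :
  reflect ((forall x, x \notin B -> s x = x) /\
           (forall x y, x \in B -> y \in B -> y \in porbit s x))
          (cyclic_arrangement B s).
Proof.
apply: (iffP andP) => [[/forallP fixB /forall_inP cycB]|[fixB cycB]]; split.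
- by move=> x xB; apply/eqP/(implyP (fixB x)).
- by move=> x y xB; apply/forall_inP/cycB.
- by apply/forallP => x; apply/implyP => xB; rewrite fixB.
- by apply/forall_inP => x xB; apply/forall_inP => y; apply: cycB.
Qed.

Lemma mem_porbitS s x y : y \in porbit s x -> s y \in porbit s x.
Proof. by case/porbitP=> i ->; rewrite -permM -expgSr mem_porbit. Qed.

Lemma cyclic_arrangement_mem B s x :
  cyclic_arrangement B s -> x \in B -> s x \in B.
Proof.
case/cyclic_arrangementP=> fixB _ xB; apply: contraT => sxB.
by move: xB; rewrite -(perm_inj (fixB _ sxB)) (negbTE sxB).
Qed.

Lemma cyclic_arrangement_memX B s x i :
  cyclic_arrangement B s -> x \in B -> (s ^+ i) x \in B.
Proof.
move=> cycB xB; elim: i => [|i IHi]; first by rewrite expg0 perm1.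
by rewrite expgSr permM; apply: cyclic_arrangement_mem.
Qed.

Lemma cyclic_arrangement_le1 B s :
  #|B| <= 1 -> cyclic_arrangement B s = (s == 1).
Proof.
move/card_le1_eqP => B1; apply/idP/eqP => [cycB|->].
  apply/permP => x; rewrite perm1.
  case: (boolP (x \in B)) => xB; last by case/cyclic_arrangementP: cycB => ->.
  by apply: B1 => //; apply: cyclic_arrangement_mem cycB xB.
apply/cyclic_arrangementP; split => [x _|x y xB yB]; first by rewrite perm1.
by rewrite (B1 _ _ yB xB) porbit_id.
Qed.

Lemma cyclic_arrangement_nofix B s x y :
  cyclic_arrangement B s -> x \in B -> y \in B -> x != y -> s x != x.
Proof.
case/cyclic_arrangementP=> _ cycB xB yB; apply: contra_neq => sx.
have sXx i : (s ^+ i) x = x.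
  by elim: i => [|i IHi]; rewrite ?expg0 ?perm1 // expgSr permM IHi.
by case/porbitP: (cycB x y xB yB) => i ->.
Qed.

(* [s * tperm z (s a)] maps [a] to [z] and [z] to [s a]: it splices [z] into the
   cycle of [s] right after [a]. *)
Lemma cyclic_arrangement_insert B s z a :
  cyclic_arrangement B s -> z \notin B -> a \in B ->
  cyclic_arrangement (z |: B) (s * tperm z (s a)).
Proof.
move=> cycB zB aB; set u := s a; set t := s * tperm z u.
have uB : u \in B by apply: cyclic_arrangement_mem.
have tE x : t x = tperm z u (s x) by rewrite permM.
have orbit_u i : (s ^+ i) u \in porbit t u.
  elim: i => [|i IHi]; first by rewrite expg0 perm1 porbit_id.
  rewrite expgSr permM; set w := (s ^+ i) u in IHi *.
  have [->|wa] := eqVneq w a; first exact: porbit_id.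
  have wB : w \in B by apply: cyclic_arrangement_memX.
  have swB : s w \in B by apply: cyclic_arrangement_mem.
  suff <- : t w = s w by apply: mem_porbitS.
  rewrite tE tpermD //; first by apply: contraNneq zB => ->.
  by apply: contra_neq wa => /perm_inj.
have orbitB x : x \in B -> x \in porbit t u.
  move=> xB; case/cyclic_arrangementP: cycB => _ /(_ u x uB xB) /porbitP[i ->].
  exact: orbit_u.
have orbit_zB x : x \in z |: B -> x \in porbit t u.
  case/setU1P => [->|]; last exact: orbitB.
  by rewrite -[z](tpermR z u) -permM; apply/mem_porbitS/orbitB.
apply/cyclic_arrangementP; split => [x|x y xzB yzB].
  rewrite !inE negb_or => /andP[xz xB].
  have ux : u != x by apply: contraNneq xB => <-.
  by case/cyclic_arrangementP: cycB => fixB _; rewrite tE fixB // tpermD // eq_sym.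
have -> : porbit t x = porbit t u by apply/eqP; rewrite eq_porbit_mem orbit_zB.
exact: orbit_zB.
Qed.

Lemma cyclic_arrangement_remove B s z :
  cyclic_arrangement B s -> z \in B ->
  cyclic_arrangement (B :\ z) (s * tperm z (s z)).
Proof.
move=> cycB zB; set u := s z; set t := s * tperm z u.
have tE x : t x = tperm z u (s x) by rewrite permM.
case/cyclic_arrangementP: (cycB) => fixB orbitB.
apply/cyclic_arrangementP; split => [x|x y].
  rewrite !inE negb_and negbK => /orP[/eqP ->|xB]; first by rewrite tE tpermR.
  have uB : u \in B by apply: cyclic_arrangement_mem.
  by rewrite tE fixB // tpermD //; apply: contraNneq xB => <-.
rewrite !inE => /andP[xz xB] /andP[yz yB].
set a := s^-1 z; have sa : s a = z by rewrite permKV.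
(* Along the [s]-orbit of [x], every point but [z] is in the [t]-orbit of [x];
   [z] itself is skipped by [t], so its predecessor [a] is recorded instead. *)
pose inv w := if w == z then a \in porbit t x else w \in porbit t x.
have inv_orbit i : inv ((s ^+ i) x).
  elim: i => [|i]; first by rewrite expg0 perm1 /inv (negbTE xz) porbit_id.
  rewrite expgSr permM; move: ((s ^+ i) x) => w; rewrite /inv.
  have [->|wz wt] := eqVneq w z.
    rewrite -/u => at_; have [//|uz] := eqVneq u z.
    suff <- : t a = u by apply: mem_porbitS.
    by rewrite tE sa tpermL.
  have [wa|wa] := eqVneq w a; first by rewrite wa sa eqxx -wa.
  have swz : s w != z by apply: contra_neq wa => swz; rewrite /a -swz permK.
  have swu : s w != u by apply: contra_neq wz => /perm_inj.
  rewrite (negbTE swz); suff <- : t w = s w by apply: mem_porbitS.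
  by rewrite tE tpermD // eq_sym.
case/porbitP: (orbitB x y xB yB) => i yE.
by move: (inv_orbit i); rewrite -yE /inv (negbTE yz).
Qed.

End CyclicArrangement.

Section Minimum.
Variable n : nat.
Local Notation T := 'I_n.
Implicit Types (B E F : {set T}) (i j z : T).

Lemma is_minP i E : reflect (i \in E /\ forall j, j \in E -> i <= j) (is_min i E).
Proof. by apply: (iffP andP) => -[iE /forall_inP]. Qed.

Lemma is_min_inj i j E : is_min i E -> is_min j E -> i = j.
Proof.
by case/is_minP => iE minI /is_minP[jE minJ]; apply/val_inj/anti_leq; rewrite minI ?minJ.
Qed.

Lemma is_min_exists E : E != set0 -> exists i, is_min i E.
Proof.
case/set0Pn => x xE; have [i iE minI] := arg_minnP (fun i : T => val i) xE.
by exists i; apply/is_minP.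
Qed.

Lemma is_min_set1 i : is_min i [set i].
Proof. by apply/is_minP; split => [|j /set1P ->]; rewrite ?set11. Qed.

Lemma is_minU1 i z B : (forall j, j \in B -> j < z) -> B != set0 ->
  is_min i (z |: B) = is_min i B.
Proof.
move=> ltBz B0; apply/is_minP/is_minP => [[/setU1P[->|iB] minI]|[iB minI]].
- case/set0Pn: B0 => j jB; have := minI j (setU1r z jB).
  by rewrite leqNgt ltBz.
- by split=> // j jB; apply/minI/setU1r.
- split=> [|j /setU1P[->|/minI //]]; first exact: setU1r.
  exact: ltnW (ltBz _ iB).
Qed.

Lemma nearly_disjointP E F :
  reflect (forall i, i \in E -> i \in F ->
             [&& is_min i E, 1 < #|E| & ~~ is_min i F] ||
             [&& is_min i F, 1 < #|F| & ~~ is_min i E])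
          (nearly_disjoint E F).
Proof.
apply: (iffP forall_inP) => [ndEF i iE iF|ndEF i]; first by apply: ndEF; rewrite inE iE.
by rewrite inE => /andP[]; apply: ndEF.
Qed.

Lemma nearly_disjointC E F : nearly_disjoint E F = nearly_disjoint F E.
Proof. by apply/nearly_disjointP/nearly_disjointP => ndEF i iE iF; rewrite orbC ndEF. Qed.

Lemma nearly_disjoint_set1 i F : nearly_disjoint [set i] F -> i \notin F.
Proof.
move/nearly_disjointP/(_ i (set11 i)) => ndiF; apply/negP => /ndiF.
by rewrite is_min_set1 cards1 /= !andbF.
Qed.

Lemma nearly_disjoint_min i E F :
  nearly_disjoint E F -> is_min i E -> ~~ is_min i F.
Proof.
move/nearly_disjointP=> ndEF minE; apply/negP => minF.
case/is_minP: (minE) => iE _; case/is_minP: (minF) => iF _.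
by move: (ndEF i iE iF); rewrite minE minF !andbF.
Qed.

End Minimum.

Section PrefixLinkedCycles.
Variable n : nat.
Local Notation T := 'I_n.
Local Notation Y := ({set {set T}} * {ffun {set T} -> {perm T}})%type.
Implicit Types (B E F : {set T}) (y : Y) (i : T).

(* Linked cycles on the prefix [i < k] of the fixed type ['I_n], so that going from
   [k] to [k.+1] needs no relabelling. *)
Definition linked_cycle_lt (k : nat) y :=
  [&& set0 \notin y.1, \bigcup_(B in y.1) B == [set i : T | i < k],
      [forall E in y.1, forall F in y.1, (E != F) ==> nearly_disjoint E F] &
      [forall B, if B \in y.1 then cyclic_arrangement B (y.2 B) else y.2 B == 1%g]].

Lemma linked_cycle_ltn P c : linked_cycle P c = linked_cycle_lt n (P, c).
Proof.
rewrite /linked_cycle_lt.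
have -> : [set i : T | i < n] = [set: T] by apply/setP => i; rewrite !inE ltn_ord.
by rewrite /linked_cycle /linked_partition -!andbA.
Qed.

Section Properties.
Variables (k : nat) (y : Y).
Hypothesis lcy : linked_cycle_lt k y.

Lemma lc_block_neq0 B : B \in y.1 -> B != set0.
Proof. by case/and4P: lcy => y0 _ _ _ BP; apply: contraNneq y0 => <-. Qed.

Lemma lc_block_lt B i : B \in y.1 -> i \in B -> i < k.
Proof.
case/and4P: lcy => _ /eqP cover _ _ BP iB.
suff : i \in \bigcup_(B in y.1) B by rewrite cover inE.
by apply/bigcupP; exists B.
Qed.

Lemma lc_cover i : i < k -> exists2 B, B \in y.1 & i \in B.
Proof.
case/and4P: lcy => _ /eqP cover _ _ ik.
by apply/bigcupP; rewrite cover inE.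
Qed.

Lemma lc_nearly_disjoint E F :
  E \in y.1 -> F \in y.1 -> E != F -> nearly_disjoint E F.
Proof.
case/and4P: lcy => _ _ /forall_inP ndP _ EP FP.
by move/forall_inP: (ndP E EP) => /(_ F FP)/implyP.
Qed.

Lemma lc_arrangement B : B \in y.1 -> cyclic_arrangement B (y.2 B).
Proof. by case/and4P: lcy => _ _ _ /forallP/(_ B) + BP; rewrite BP. Qed.

Lemma lc_arrangement_out B : B \notin y.1 -> y.2 B = 1%g.
Proof.
by case/and4P: lcy => _ _ _ /forallP/(_ B) + BP; rewrite (negbTE BP) => /eqP.
Qed.

End Properties.

Lemma linked_cycle_ltI k y :
  set0 \notin y.1 -> (forall B i, B \in y.1 -> i \in B -> i < k) ->
  (forall i : T, i < k -> exists2 B, B \in y.1 & i \in B) ->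
  (forall E F, E \in y.1 -> F \in y.1 -> E != F -> nearly_disjoint E F) ->
  (forall B, B \in y.1 -> cyclic_arrangement B (y.2 B)) ->
  (forall B, B \notin y.1 -> y.2 B = 1%g) ->
  linked_cycle_lt k y.
Proof.
move=> y0 ltk cover ndP cycP outP; apply/and4P; split=> //.
- apply/eqP/setP => i; rewrite inE.
  by apply/bigcupP/idP => [[B /ltk]|/cover//]; apply.
- by apply/forall_inP => E EP; apply/forall_inP => F FP; apply/implyP; apply: ndP.
- by apply/forallP => B; case: ifPn => [/cycP|/outP ->].
Qed.

Lemma linked_cycle_lt0 y : linked_cycle_lt 0 y = (y == (set0, [ffun => 1%g])).
Proof.
apply/idP/eqP => [lcy|->]; last first.
  by apply: linked_cycle_ltI => /= [|B i|i|E F|B|B _]; rewrite ?inE ?ffunE ?ltn0.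
have y0 : y.1 = set0.
  apply/setP => B; rewrite inE; apply/negP => BP.
  by have [i] := set0Pn _ (lc_block_neq0 lcy BP); move/(lc_block_lt lcy BP).
rewrite [y]surjective_pairing y0; congr pair; apply/ffunP => B.
by rewrite ffunE (lc_arrangement_out lcy) // y0 inE.
Qed.

End PrefixLinkedCycles.

Lemma pick_unique (T : finType) (p : pred T) (u : T) :
  (forall v, p v = (v == u)) -> [pick v | p v] = Some u.
Proof.
move=> pE; case: pickP => [v|/(_ u)]; first by rewrite pE => /eqP ->.
by rewrite pE eqxx.
Qed.

Section Extension.
Variable n : nat.
Local Notation T := 'I_n.
Local Notation Y := ({set {set T}} * {ffun {set T} -> {perm T}})%type.
Implicit Types (B E F X : {set T}) (P : {set {set T}}) (y : Y) (a i j : T).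

Definition child P j := [exists B in P, (j \in B) && ~~ is_min j B].
Definition children P := [set j | child P j].
Definition own_block P a := odflt [set a] [pick B in P | is_min a B].
Definition parent_block P a := odflt set0 [pick B in P | (a \in B) && ~~ is_min a B].
Definition block_of P a := odflt set0 [pick B in P | a \in B].

Variable z : T.

Definition insert_after y B a : Y :=
  ((y.1 :\ B) :|: [set z |: B],
   [ffun X => if X == z |: B then (y.2 B * tperm z (y.2 B a))%g
              else if X == B then 1%g else y.2 X]).

(* [Some (a, b)] places [z] right after [a], in the block of which [a] is the minimum
   (a new block [{a, z}] if there is none) when [b] is false, and in the block in which
   [a] is not the minimum when [b] is true; [None] makes [{z}] a new block. *)
Definition choice_block y a (b : bool) :=
  if b then parent_block y.1 a else own_block y.1 a.

Definition valid_choice y (ch : option (T * bool)) :=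
  if ch is Some (a, b) then (if b then child y.1 a else a < z) else true.

Definition extend y (ch : option (T * bool)) : Y :=
  if ch is Some (a, b) then insert_after y (choice_block y a b) a
  else (y.1 :|: [set [set z]], y.2).

(* The block [B] left behind by [z] is dropped when it is empty, and when it is
   a singleton also contained in another block. *)
Definition restrict y : Y :=
  let Bz := block_of y.1 z in let B := Bz :\ z in
  ((y.1 :\ Bz) :|: (if (1 < #|B|) || ~~ (B \subset \bigcup_(X in y.1 :\ Bz) X)
                    then [set B] else set0),
   [ffun X => if X == B then (y.2 Bz * tperm z (y.2 Bz z))%g
              else if X == Bz then 1%g else y.2 X]).

Section Extend.
Variable y : Y.
Hypothesis lcy : linked_cycle_lt z y.

Lemma lc_notin_block B : B \in y.1 -> z \notin B.
Proof. by move=> BP; apply/negP => /(lc_block_lt lcy BP); rewrite ltnn. Qed.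

Definition insertion_site B a :=
  a \in B /\ (B \in y.1 \/
    [/\ B = [set a], a < z & forall X, X \in y.1 -> a \in X -> ~~ is_min a X]).

Lemma insertion_site_block B a : insertion_site B a ->
  [/\ forall i, i \in B -> i < z, z \notin B, B != set0 &
      cyclic_arrangement B (y.2 B)].
Proof.
case=> aB siteB; have ltBz i : i \in B -> i < z.
  by case: siteB => [BP /(lc_block_lt lcy BP)|[-> az _] /set1P ->].
split=> //; first by apply/negP => /ltBz; rewrite ltnn.
  by apply/set0Pn; exists a.
case: siteB => [/(lc_arrangement lcy)//|[-> _ notmin]].
rewrite cyclic_arrangement_le1 ?cards1 // (lc_arrangement_out lcy) //.
by apply/negP => /notmin/(_ (set11 a)); rewrite is_min_set1.
Qed.

Lemma insert_nearly_disjoint B a F : insertion_site B a ->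
  F \in y.1 -> F != B -> nearly_disjoint (z |: B) F.
Proof.
move=> site FP FB; have [ltBz zB B0 _] := insertion_site_block site.
apply/nearly_disjointP => i /setU1P[->|iB iF].
  by rewrite (negbTE (lc_notin_block FP)).
rewrite is_minU1 // cardsU1 zB add1n ltnS card_gt0 B0 /=.
case: site => _ [BP|[BE _ notmin]].
  have BF : B != F by rewrite eq_sym.
  move/nearly_disjointP: (lc_nearly_disjoint lcy BP FP BF) => /(_ i iB iF).
  by case/orP => /and3P[-> B1 ->]; rewrite ?B1 ?orbT.
by move: iB iF; rewrite BE => /set1P -> aF; rewrite is_min_set1 notmin.
Qed.

Lemma insert_after_valid B a : insertion_site B a ->
  linked_cycle_lt z.+1 (insert_after y B a).
Proof.
move=> site; have [ltBz zB B0 cycB] := insertion_site_block site.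
have zBin : z |: B \in (y.1 :\ B) :|: [set z |: B] by rewrite !inE eqxx orbT.
apply: linked_cycle_ltI => /=.
- apply/negP => /setUP[/setD1P[_ /(lc_block_neq0 lcy)/eqP //]|/set1P/setP/(_ z)].
  by rewrite !inE eqxx.
- move=> X i /setUP[/setD1P[_ XP] /(lc_block_lt lcy XP)/ltnW //|/set1P ->].
  by case/setU1P => [->|/ltBz/ltnW].
- move=> i; rewrite ltnS leq_eqVlt => /predU1P[/val_inj ->|iz].
    by exists (z |: B); rewrite ?setU11.
  have [X XP iX] := lc_cover lcy iz.
  have [XB|XB] := eqVneq X B; first by exists (z |: B); rewrite // -XB setU1r.
  by exists X; rewrite // !inE XB XP.
- move=> E F /setUP[/setD1P[EB EP]|/set1P ->] /setUP[/setD1P[FB FP]|/set1P ->] EF.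
  + exact: (lc_nearly_disjoint lcy EP FP EF).
  + by rewrite nearly_disjointC; apply: insert_nearly_disjoint site EP EB.
  + exact: insert_nearly_disjoint site FP FB.
  + by rewrite eqxx in EF.
- move=> X; rewrite ffunE !inE orbC.
  have [-> _|_] := eqVneq X (z |: B).
    by apply: cyclic_arrangement_insert; case: site.
  by case: eqVneq => //= _ /(lc_arrangement lcy).
- move=> X; rewrite ffunE !inE orbC.
  have [->|_] := eqVneq X (z |: B) => //=.
  by case: eqVneq => //= _ /(lc_arrangement_out lcy).
Qed.

Lemma own_block_site a : a < z ->
  insertion_site (own_block y.1 a) a /\ is_min a (own_block y.1 a).
Proof.
move=> az; rewrite /own_block; case: pickP => [B /andP[BP minB]|noB] /=.
  by split=> //; split; [case/is_minP: minB|left].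
split; last exact: is_min_set1.
split; first exact: set11.
by right; split=> // X XP aX; move: (noB X); rewrite XP /= => ->.
Qed.

Lemma parent_block_site a : child y.1 a ->
  insertion_site (parent_block y.1 a) a /\ ~~ is_min a (parent_block y.1 a).
Proof.
move=> cha; rewrite /parent_block; case: pickP => [B /and3P[BP aB minB]|noB] /=.
  by split=> //; split=> //; left.
by case/exists_inP: cha => B BP aB; move: (noB B); rewrite BP aB.
Qed.

Lemma choice_block_site a b : valid_choice y (Some (a, b)) ->
  insertion_site (choice_block y a b) a /\ is_min a (choice_block y a b) = ~~ b.
Proof.
rewrite /choice_block; case: b => /= valid.
  by case: (parent_block_site valid) => site /negbTE.
exact: own_block_site.
Qed.

Lemma extend_valid ch : valid_choice y ch -> linked_cycle_lt z.+1 (extend y ch).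
Proof.
case: ch => [[a b] /choice_block_site[site _]|_]; first exact: insert_after_valid.
have zP : [set z] \notin y.1 by apply/negP => /lc_notin_block; rewrite set11.
apply: linked_cycle_ltI => /=.
- rewrite !inE negb_or; apply/andP; split; first by case/and4P: lcy.
  by apply/eqP => /setP/(_ z); rewrite !inE eqxx.
- move=> X i /setUP[XP /(lc_block_lt lcy XP)/ltnW //|/set1P -> /set1P ->].
  exact: ltnSn.
- move=> i; rewrite ltnS leq_eqVlt => /predU1P[/val_inj ->|iz].
    by exists [set z]; rewrite !inE ?eqxx ?orbT.
  by have [X XP iX] := lc_cover lcy iz; exists X; rewrite // inE XP.
- have ndz F : F \in y.1 -> nearly_disjoint [set z] F.
    move=> FP; apply/nearly_disjointP => i /set1P -> zF.
    by move: (lc_notin_block FP); rewrite zF.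
  move=> E F /setUP[EP|/set1P ->] /setUP[FP|/set1P ->] EF.
  + exact: (lc_nearly_disjoint lcy EP FP EF).
  + by rewrite nearly_disjointC; apply: ndz.
  + exact: ndz.
  + by rewrite eqxx in EF.
- move=> X /setUP[/(lc_arrangement lcy) //|/set1P ->].
  by rewrite cyclic_arrangement_le1 ?cards1 // (lc_arrangement_out lcy).
- by move=> X; rewrite inE negb_or => /andP[/(lc_arrangement_out lcy)].
Qed.

Lemma children_insert B a : insertion_site B a ->
  children (insert_after y B a).1 = z |: children y.1.
Proof.
move=> site; have [ltBz zB B0 _] := insertion_site_block site.
have zBin : z |: B \in (y.1 :\ B) :|: [set z |: B] by rewrite !inE eqxx orbT.
apply/setP => j; rewrite !inE; apply/exists_inP/predU1P => [[X]|].
  case/setUP => [/setD1P[_ XP] chj|/set1P -> /andP[]].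
    by right; apply/exists_inP; exists X.
  case/setU1P => [-> _|jB]; first by left.
  rewrite is_minU1 // => minj; right.
  case: site => _ [BP|[BE _ _]]; first by apply/exists_inP; exists B; rewrite ?jB.
  by move: jB minj; rewrite BE => /set1P ->; rewrite is_min_set1.
case=> [->|/exists_inP[X XP /andP[jX minj]]].
  exists (z |: B); rewrite // setU11 is_minU1 //=.
  by apply: contra zB => /is_minP[].
have [XB|XB] := eqVneq X B; last by exists X; [rewrite !inE XB XP|rewrite jX].
by exists (z |: B); rewrite // is_minU1 // -XB minj andbT setU1r.
Qed.

Lemma card_children_extend ch : valid_choice y ch ->
  #|children (extend y ch).1| =
    if ch is Some _ then #|children y.1|.+1 else #|children y.1|.
Proof.
case: ch => [[a b] /choice_block_site[site _]|_] /=.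
  suff zch : ~~ child y.1 z by rewrite (children_insert site) cardsU1 inE zch.
  by apply/exists_inP => -[X /lc_notin_block/negbTE->].
apply: eq_card => j; rewrite !inE; apply/exists_inP/exists_inP => [[X]|[X XP chj]].
  by case/setUP => [XP|/set1P -> /andP[/set1P ->]]; [exists X|rewrite is_min_set1].
by exists X; rewrite // inE XP.
Qed.

Lemma block_of_insert B a : insertion_site B a ->
  block_of (insert_after y B a).1 z = z |: B.
Proof.
move=> site; rewrite /block_of (@pick_unique _ _ (z |: B)) // => X; rewrite !inE.
have [->|XzB] := eqVneq X (z |: B); first by rewrite setU11 orbT.
by rewrite orbF; apply/negP => /andP[/andP[_ /lc_notin_block/negP]].
Qed.

Lemma insertion_site_kept B a : insertion_site B a ->
  (1 < #|B|) || ~~ (B \subset \bigcup_(X in y.1 :\ B) X) = (B \in y.1).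
Proof.
case=> aB [BP|[BE az notmin]].
  rewrite BP; case: ltnP => //= B1.
  have BE : B = [set a] by apply/eqP; rewrite eq_sym eqEcard sub1set aB cards1.
  apply/negP => /subsetP/(_ a aB)/bigcupP[X /setD1P[XB XP] aX].
  have BX : B != X by rewrite eq_sym.
  have := lc_nearly_disjoint lcy BP XP BX.
  by rewrite BE => /nearly_disjoint_set1; rewrite aX.
rewrite BE cards1 /=.
have -> : [set a] \in y.1 = false.
  by apply/negP => /notmin/(_ (set11 a)); rewrite is_min_set1.
apply/subsetP => _ /set1P ->; have [X XP aX] := lc_cover lcy az.
apply/bigcupP; exists X => //; rewrite !inE XP andbT.
by apply: contraTneq (notmin X XP aX) => ->; rewrite is_min_set1.
Qed.

Lemma restrict_insert B a : insertion_site B a -> restrict (insert_after y B a) = y.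
Proof.
move=> site; have [_ zB _ cycB] := insertion_site_block site.
have zBP : z |: B \notin y.1 by apply/negP => /lc_notin_block; rewrite setU11.
rewrite /restrict /= (block_of_insert site) setU1K //.
have -> : ((y.1 :\ B) :|: [set z |: B]) :\ (z |: B) = y.1 :\ B.
  rewrite setDUl setDv setU0; apply/setDidPl.
  by rewrite disjoint_sym disjoints1 inE negb_and zBP orbT.
rewrite (insertion_site_kept site) [RHS]surjective_pairing; congr pair.
  case: ifPn => BP; first by rewrite setUC setD1K.
  by rewrite setU0; apply/setDidPl; rewrite disjoint_sym disjoints1.
apply/ffunP => X; rewrite !ffunE eqxx.
have [->|XB] := eqVneq X B.
  have -> : (y.2 B * tperm z (y.2 B a))%g z = y.2 B a.
    by case/cyclic_arrangementP: cycB => fixB _; rewrite permM (fixB z) // tpermL.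
  by rewrite -mulgA tperm2 mulg1.
by case: eqVneq => // ->; rewrite (lc_arrangement_out lcy).
Qed.

Lemma block_of_extend ch : valid_choice y ch -> block_of (extend y ch).1 z =
  if ch is Some (a, b) then z |: choice_block y a b else [set z].
Proof.
case: ch => [[a b] /choice_block_site[site _]|_]; first exact: block_of_insert.
rewrite /block_of (@pick_unique _ _ [set z]) // => X; rewrite !inE.
have [->|Xz] := eqVneq X [set z]; first by rewrite set11 orbT.
by rewrite orbF; apply/negP => /andP[/lc_notin_block/negP].
Qed.

Lemma restrict_extend ch : valid_choice y ch -> restrict (extend y ch) = y.
Proof.
case: ch => [[a b] /choice_block_site[site _]|_]; first exact: restrict_insert.
have zP : [set z] \notin y.1 by apply/negP => /lc_notin_block; rewrite set11.
rewrite /restrict (block_of_extend (ch := None)) //= setDv cards0 sub0set /= setU0.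
rewrite [RHS]surjective_pairing; congr pair.
  by rewrite setDUl setDv setU0; apply/setDidPl; rewrite disjoint_sym disjoints1.
apply/ffunP => X; rewrite ffunE (lc_arrangement_out lcy zP) perm1 tperm1 mulg1.
have [->|_] := eqVneq X set0.
  by rewrite (lc_arrangement_out lcy) //; case/and4P: lcy.
by case: eqVneq => // ->; rewrite (lc_arrangement_out lcy zP).
Qed.

Lemma extend_inj ch1 ch2 : valid_choice y ch1 -> valid_choice y ch2 ->
  extend y ch1 = extend y ch2 -> ch1 = ch2.
Proof.
move=> v1 v2 e12; have := congr1 (fun y' : Y => block_of y'.1 z) e12.
rewrite /= !block_of_extend //.
have zBz a b : valid_choice y (Some (a, b)) -> z |: choice_block y a b != [set z].
  case/choice_block_site => site _; have [_ zB B0 _] := insertion_site_block site.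
  by apply: contraNneq B0 => /(congr1 (fun A => A :\ z)); rewrite setU1K // setDv => ->.
case: ch1 ch2 v1 v2 e12 => [[a1 b1]|] [[a2 b2]|] // v1 v2 e12 eB; last 2 first.
- by move/eqP: eB; rewrite (negbTE (zBz _ _ v1)).
- by move/esym/eqP: eB; rewrite (negbTE (zBz _ _ v2)).
have [site1 min1] := choice_block_site v1; have [site2 min2] := choice_block_site v2.
have [_ zB1 _ _] := insertion_site_block site1; have [_ zB2 _ _] := insertion_site_block site2.
have eB' : choice_block y a1 b1 = choice_block y a2 b2 by rewrite -(setU1K zB1) eB setU1K.
move/(congr1 (fun y' : Y => y'.2 (z |: choice_block y a1 b1))): e12.
rewrite /= !ffunE -eB' eqxx => /mulgI/(congr1 (fun t : {perm T} => t z)).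
rewrite !tpermL => /perm_inj a12; subst a2.
by congr (Some (_, _)); apply: negb_inj; rewrite -min1 -min2 eB'.
Qed.

End Extend.

Section Restrict.
Variable y : Y.
Hypothesis lcy : linked_cycle_lt z.+1 y.

Local Notation Bz := (block_of y.1 z).
Local Notation B := (Bz :\ z).
Local Notation kept := ((1 < #|B|) || ~~ (B \subset \bigcup_(X in y.1 :\ Bz) X)).

Lemma lc_ltz X i : X \in y.1 -> i \in X -> i != z -> i < z.
Proof.
move=> XP iX iz; rewrite ltn_neqAle -ltnS (lc_block_lt lcy XP iX) andbT.
by apply: contra iz => /eqP/val_inj ->.
Qed.

Lemma lc_min_z X : X \in y.1 -> is_min z X -> X = [set z].
Proof.
move=> XP /is_minP[zX minz]; apply/setP => i; rewrite inE.
apply/idP/eqP => [iX|-> //]; apply: contraTeq (minz i iX) => iz.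
by rewrite -ltnNge (lc_ltz XP).
Qed.

Lemma block_of_z_eq X : X \in y.1 -> z \in X -> block_of y.1 z = X.
Proof.
move=> XP zX; rewrite /block_of (@pick_unique _ _ X) //= => W.
apply/andP/eqP => [[WP zW]|-> //]; apply/eqP; apply: contraT => WX.
move/nearly_disjointP: (lc_nearly_disjoint lcy WP XP WX) => /(_ z zW zX).
case/orP => /and3P[minz card1 _].
  by move: card1; rewrite (lc_min_z WP minz) cards1.
by move: card1; rewrite (lc_min_z XP minz) cards1.
Qed.

Lemma block_of_zP : Bz \in y.1 /\ z \in Bz.
Proof.
by have [X XP zX] := lc_cover lcy (ltnSn z); rewrite (block_of_z_eq XP zX).
Qed.

Lemma restrict_lt i : i \in B -> i < z.
Proof.
by case: block_of_zP => BzP _; rewrite !inE => /andP[iz iBz]; apply: (lc_ltz BzP).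
Qed.

Lemma is_min_block_of i : B != set0 -> is_min i Bz = is_min i B.
Proof.
case: block_of_zP => _ zBz B0; rewrite -{1}(setD1K zBz) is_minU1 //.
exact: restrict_lt.
Qed.

Lemma restrict_block_notin : B \notin y.1.
Proof.
apply/negP => BP; have B0 := lc_block_neq0 lcy BP.
have [m minB] := is_min_exists B0; have [BzP zBz] := block_of_zP.
have BBz : B != Bz by apply: contraTneq zBz => <-; rewrite setD11.
have := nearly_disjoint_min (lc_nearly_disjoint lcy BP BzP BBz) minB.
by rewrite is_min_block_of // minB.
Qed.

Lemma kept_neq0 : kept -> B != set0.
Proof. by apply: contraTneq => ->; rewrite cards0 sub0set. Qed.

Lemma restrict_nearly_disjoint X : kept -> X \in y.1 -> X != Bz ->
  nearly_disjoint B X.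
Proof.
move=> kB XP XBz; have [BzP zBz] := block_of_zP; have B0 := kept_neq0 kB.
apply/nearly_disjointP => i iB iX.
have B1 : 1 < #|B|.
  move: kB; case: ltnP => //= B1 /negP[]; apply/subsetP => j jB.
  have -> : j = i by apply: (card_le1_eqP B1).
  by apply/bigcupP; exists X; rewrite // !inE XBz.
have BzX : Bz != X by rewrite eq_sym.
have iBz : i \in Bz by move: iB; rewrite inE => /andP[].
move/nearly_disjointP: (lc_nearly_disjoint lcy BzP XP BzX) => /(_ i iBz iX).
rewrite -!is_min_block_of //.
by case/orP => /and3P[-> X1 ->]; rewrite ?B1 ?X1 ?orbT.
Qed.

Lemma restrict_arrangement : cyclic_arrangement B (y.2 Bz * tperm z (y.2 Bz z))%g.
Proof.
have [BzP zBz] := block_of_zP.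
exact: cyclic_arrangement_remove (lc_arrangement lcy BzP) zBz.
Qed.

Lemma restrict_valid : linked_cycle_lt z (restrict y).
Proof.
have [BzP zBz] := block_of_zP.
have keptP X : X \in (if kept then [set B] else set0) -> kept /\ X = B.
  by case: ifP => kB; rewrite ?inE // => /eqP.
apply: linked_cycle_ltI => /=.
- apply/negP => /setUP[/setD1P[_ /(lc_block_neq0 lcy)/eqP //]|].
  by case/keptP => /kept_neq0 B0 eB; rewrite -eB eqxx in B0.
- move=> X i /setUP[/setD1P[XBz XP] iX|/keptP[_ ->]]; last exact: restrict_lt.
  apply: (lc_ltz XP iX); apply: contraNneq XBz => iz.
  by rewrite (block_of_z_eq XP) ?eqxx // -iz.
- move=> i iz; have [X XP iX] := lc_cover lcy (ltnW iz).
  have [XBz|XBz] := eqVneq X Bz; last by exists X; rewrite // !inE XBz XP.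
  have iB : i \in B.
    by rewrite !inE -XBz iX andbT; apply: contraTneq iz => ->; rewrite ltnn.
  case kB: kept; first by exists B; rewrite // !inE eqxx orbT.
  move: kB => /norP[_ /negbNE/subsetP/(_ i iB)/bigcupP[W WP iW]].
  by exists W; rewrite // inE WP.
- move=> E F /setUP[/setD1P[EBz EP]|/keptP[kE ->]]
    /setUP[/setD1P[FBz FP]|/keptP[kF ->]] EF.
  + exact: (lc_nearly_disjoint lcy EP FP EF).
  + by rewrite nearly_disjointC; apply: restrict_nearly_disjoint.
  + exact: restrict_nearly_disjoint.
  + by rewrite eqxx in EF.
- move=> X; rewrite ffunE => /setUP[/setD1P[XBz XP]|/keptP[_ ->]]; last first.
    by rewrite eqxx restrict_arrangement.
  have XB : X != B by apply: contraNneq restrict_block_notin => <-.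
  by rewrite (negbTE XB) (negbTE XBz); apply: (lc_arrangement lcy).
- move=> X; rewrite ffunE !inE negb_or negb_and negbK.
  have [->|_] := eqVneq X B.
    case: ifPn => [_|notkept _]; first by rewrite set11 /= andbF.
    have B1 : #|B| <= 1 by move: notkept; case: ltnP.
    by apply/eqP; rewrite -(cyclic_arrangement_le1 _ B1) restrict_arrangement.
  case/andP => /orP[/eqP ->|XP] _; first by rewrite eqxx.
  by rewrite (lc_arrangement_out lcy XP); case: eqVneq.
Qed.

Lemma restrict_blockP X : X \in (restrict y).1 ->
  (X \in y.1 /\ X != Bz) \/ (kept /\ X = B).
Proof.
rewrite inE => /orP[/setD1P[XBz XP]|]; first by left.
by case: ifP => kB; rewrite ?inE // => /eqP; right.
Qed.

Lemma restrict_block_kept : kept -> B \in (restrict y).1.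
Proof. by move=> kB; rewrite /= kB !inE eqxx orbT. Qed.

Lemma own_block_restrict m : is_min m B -> own_block (restrict y).1 m = B.
Proof.
move=> minB; have B0 : B != set0 by apply/set0Pn; exists m; case/is_minP: minB.
have [BzP _] := block_of_zP.
rewrite /own_block; case: pickP => [X /andP[+ minX]|noX] /=.
  case/restrict_blockP => [[XP XBz]|[_ ->//]].
  have := nearly_disjoint_min (lc_nearly_disjoint lcy XP BzP XBz) minX.
  by rewrite is_min_block_of // minB.
case kB: kept; first by move: (noX B); rewrite restrict_block_kept // minB.
have B1 : #|B| <= 1 by move: kB; case: ltnP.
by apply/eqP; rewrite eqEcard sub1set cards1 B1 andbT; case/is_minP: minB.
Qed.

Lemma parent_block_restrict a : kept -> a \in B -> ~~ is_min a B ->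
  parent_block (restrict y).1 a = B.
Proof.
move=> kB aB nminB; have [BzP zBz] := block_of_zP; have B0 := kept_neq0 kB.
rewrite /parent_block (@pick_unique _ _ B) // => X; apply/idP/eqP => [|->].
  case/andP => /restrict_blockP[[XP XBz]|[_ ->//]] /andP[aX nminX].
  have aBz : a \in Bz by move: aB; rewrite inE => /andP[].
  move/nearly_disjointP: (lc_nearly_disjoint lcy XP BzP XBz) => /(_ a aX aBz).
  by rewrite is_min_block_of // (negbTE nminX) (negbTE nminB).
by rewrite restrict_block_kept // aB nminB.
Qed.

Lemma insert_restrict a : a \in B -> y.2 Bz a = z ->
  insert_after (restrict y) B a = y.
Proof.
move=> aB sa; have [BzP zBz] := block_of_zP.
rewrite /insert_after [RHS]surjective_pairing /= (setD1K zBz); congr pair.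
  apply/setP => X; rewrite !inE.
  have [->|XBz] := eqVneq X Bz; first by rewrite BzP orbT.
  have [->|XB] := eqVneq X B; first by rewrite (negbTE restrict_block_notin) andbF.
  by case: ifP; rewrite ?inE ?(negbTE XB) ?orbF.
apply/ffunP => X; rewrite !ffunE eqxx.
have [->|XBz] := eqVneq X Bz; first by rewrite permM sa tpermL -mulgA tperm2 mulg1.
case: eqVneq => [->|//]; exact/esym/(lc_arrangement_out lcy)/restrict_block_notin.
Qed.

Lemma restrict_pred_mem : B != set0 -> (y.2 Bz)^-1%g z \in B.
Proof.
move=> B0; have [BzP zBz] := block_of_zP; have cycBz := lc_arrangement lcy BzP.
set s := y.2 Bz; set a := (s^-1)%g z; have sa : s a = z by rewrite permKV.
have aBz : a \in Bz.
  apply: contraT => aBz; case/cyclic_arrangementP: cycBz => /(_ a aBz).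
  by rewrite sa => za; move: aBz; rewrite -za zBz.
rewrite !inE aBz andbT; apply/eqP => az.
suff : s z != z by rewrite -{1}az sa eqxx.
have [m mB] := set0Pn _ B0; move: mB; rewrite !inE => /andP[mz mBz].
by apply: cyclic_arrangement_nofix cycBz zBz mBz _; rewrite eq_sym.
Qed.

Lemma extend_restrict :
  exists2 ch, valid_choice (restrict y) ch & extend (restrict y) ch = y.
Proof.
have [BzP zBz] := block_of_zP.
have [B0|B0] := eqVneq B set0.
  have BzE : Bz = [set z] by rewrite -(setD1K zBz) B0 setU0.
  have s1 : y.2 Bz = 1%g.
    have Bz1 : #|Bz| <= 1 by rewrite BzE cards1.
    by apply/eqP; rewrite -(cyclic_arrangement_le1 _ Bz1) (lc_arrangement lcy).
  exists None => //; rewrite [RHS]surjective_pairing; congr pair.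
    by rewrite /= B0 cards0 sub0set setU0 -BzE setUC setD1K.
  apply/ffunP => X; rewrite ffunE B0 s1 perm1 tperm1 mulg1.
  have [->|_] := eqVneq X set0; last by case: eqVneq => // ->.
  by rewrite (lc_arrangement_out lcy) //; case/and4P: lcy.
have aB := restrict_pred_mem B0; set a := (y.2 Bz)^-1%g z in aB.
have sa : y.2 Bz a = z by rewrite permKV.
have [m minB] := is_min_exists B0.
have [am|am] := eqVneq a m.
  exists (Some (m, false)); first by apply: restrict_lt; case/is_minP: minB.
  by rewrite /= /choice_block (own_block_restrict minB) -am insert_restrict.
have kB : kept.
  apply/orP; left; case/is_minP: minB => mB _.
  rewrite (cardsD1 a) aB add1n ltnS card_gt0; apply/set0Pn.
  by exists m; rewrite in_setD1 eq_sym am.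
have nminB : ~~ is_min a B by apply: contra am => /(is_min_inj minB) ->.
exists (Some (a, true)).
  by apply/exists_inP; exists B; rewrite ?restrict_block_kept ?aB.
by rewrite /= /choice_block (parent_block_restrict kB aB nminB) insert_restrict.
Qed.

End Restrict.
End Extension.

Section LinkedCyclePolynomial.
Variable R : comNzRingType.
Local Open Scope ring_scope.

(* [lc_poly k.+1] is the Bessel polynomial [y_k]. *)
Fixpoint lc_poly (k : nat) : {poly R} :=
  if k is k'.+1 then lc_poly k' + 'X * lc_poly k' *+ k' + 'X^2 * (lc_poly k')^`() else 1.

Lemma lc_polyS k :
  lc_poly k.+1 = lc_poly k + 'X * lc_poly k *+ k + 'X^2 * (lc_poly k)^`().
Proof. by []. Qed.

Lemma lc_poly_deriv k :
  'X^2 * (lc_poly k)^`() = lc_poly k.+1 - lc_poly k - 'X * lc_poly k *+ k.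
Proof. by rewrite lc_polyS; ring. Qed.

Lemma lc_poly1 : lc_poly 1 = 1.
Proof. by rewrite lc_polyS -polyC1 derivC /=; ring. Qed.

Lemma lc_poly_rec m : lc_poly m.+2 = 'X * lc_poly m.+1 *+ (2 * m).+1 + lc_poly m.
Proof.
elim: m => [|m IHm]; first by rewrite lc_polyS lc_poly1 -polyC1 derivC /=; ring.
have dIHm : (lc_poly m.+2)^`() =
    (lc_poly m.+1 + 'X * (lc_poly m.+1)^`()) *+ (2 * m).+1 + (lc_poly m)^`().
  by rewrite IHm derivD derivMn derivM derivX mul1r.
rewrite [lc_poly m.+3]lc_polyS.
(* the derivatives left are those of [lc_poly m.+1] and [lc_poly m], which
   [lc_poly_deriv] trades for the polynomials themselves *)
have -> : 'X^2 * (lc_poly m.+2)^`() =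
    ('X^2 * lc_poly m.+1 + 'X * ('X^2 * (lc_poly m.+1)^`())) *+ (2 * m).+1 +
    'X^2 * (lc_poly m)^`() by rewrite dIHm; ring.
by rewrite !lc_poly_deriv IHm; ring.
Qed.

End LinkedCyclePolynomial.

Section Counting.
Variable n : nat.
Local Notation T := 'I_n.
Local Notation Y := ({set {set T}} * {ffun {set T} -> {perm T}})%type.

Lemma card_ltn_ord (z : T) : #|[set a : T | a < z]| = z.
Proof.
have widen_inj : injective (widen_ord (ltnW (ltn_ord z))).
  by move=> i j /(congr1 val) /= eqij; apply: val_inj.
rewrite -[RHS]card_ord -(card_imset _ widen_inj); apply: eq_card => a.
rewrite !inE; apply/idP/imsetP => [az|[i _ ->]]; last exact: (ltn_ord i).
by exists (Ordinal az); last exact: val_inj.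
Qed.

Lemma card_valid_choices (z : T) (y : Y) :
  #|[set p : T * bool | valid_choice z y (Some p)]| = z + #|children y.1|.
Proof.
have -> : [set p : T * bool | valid_choice z y (Some p)] =
    [set (a, false) | a in [set a : T | a < z]] :|: [set (a, true) | a in children y.1].
  apply/setP => -[a b]; rewrite !inE /=.
  apply/idP/orP => [|[]/imsetP[a' a'P [-> ->]]]; last 2 first.
  - by rewrite inE in a'P.
  - by rewrite inE in a'P.
  by case: b => valid; [right|left]; apply/imsetP; exists a; rewrite ?inE.
rewrite cardsU (_ : _ :&: _ = set0) ?cards0 ?subn0.
  by rewrite !card_imset ?card_ltn_ord // => a b [].
apply/setP => -[a b]; rewrite !inE.
by apply/andP => -[/imsetP[? _ [_ ->]] /imsetP[? _ [_]]].
Qed.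

Variable R : comNzRingType.
Local Open Scope ring_scope.

Lemma sum_children_extend (z : T) :
  \sum_(y' : Y | linked_cycle_lt z.+1 y') 'X^#|children y'.1| =
  \sum_(y : Y | linked_cycle_lt z y)
     ('X^#|children y.1| + 'X^(#|children y.1|.+1) *+ (z + #|children y.1|)) :> {poly R}.
Proof.
rewrite (partition_big (restrict z) (linked_cycle_lt z)) => [|y' /restrict_valid //].
apply: eq_bigr => y lcy.
rewrite (eq_bigl (mem (extend z y @: [set ch | valid_choice z y ch]))) => [|y'].
  rewrite big_imset /= => [|ch1 ch2]; last by rewrite !inE; apply: extend_inj.
  rewrite (bigD1 None) ?inE // (card_children_extend lcy (ch := None)) //.
  congr (_ + _).
  rewrite (eq_bigl (mem (Some @: [set p | valid_choice z y (Some p)]))) => [|[p|]];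
    last 2 first.
  - rewrite !inE andbT; apply/idP/imsetP => [v|[p' + [->]]]; last by rewrite inE.
    by exists p; rewrite ?inE.
  - by rewrite !inE /=; apply/esym/negbTE/imsetP => -[].
  rewrite big_imset /= => [|p1 p2 _ _ [] //].
  rewrite (eq_bigr (fun _ => 'X^(#|children y.1|.+1))) => [|p]; last first.
    by rewrite inE => v; rewrite (card_children_extend lcy (ch := Some p) v).
  by rewrite sumr_const card_valid_choices.
apply/andP/imsetP => [[lcy' /eqP <-]|[ch valid ->]].
  have [ch valid ext_ch] := extend_restrict lcy'.
  by exists ch; [rewrite inE | rewrite ext_ch].
by rewrite inE in valid; split; [exact: extend_valid | rewrite restrict_extend].
Qed.

Definition children_poly (k : nat) : {poly R} :=
  \sum_(y : Y | linked_cycle_lt k y) 'X^#|children y.1|.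

Lemma children_poly0 : children_poly 0 = 1.
Proof.
rewrite /children_poly (big_pred1 (set0, [ffun => 1%g])) /=; last exact: linked_cycle_lt0.
rewrite (_ : children (set0 : {set {set T}}) = set0) ?cards0 //.
by apply/setP => j; rewrite !inE; apply/exists_inP => -[B]; rewrite inE.
Qed.

Lemma children_polyS (z : T) : children_poly z.+1 =
  children_poly z + 'X * children_poly z *+ z + 'X^2 * (children_poly z)^`().
Proof.
rewrite /children_poly sum_children_extend raddf_sum mulr_sumr -sumrMnl mulr_sumr.
rewrite -!big_split.
apply: eq_bigr => y _ /=; rewrite derivXn mulrnDr -exprS addrA; congr (_ + _).
by case: #|children y.1| => [|c]; rewrite ?mulr0n ?mulr0 // mulrnAr -exprD.
Qed.

Lemma children_poly_lc_poly k : (k <= n)%N -> children_poly k = lc_poly R k.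
Proof.
elim: k => [_|k IHk kn]; first exact: children_poly0.
by rewrite (children_polyS (Ordinal kn)) IHk // ltnW.
Qed.

End Counting.

Lemma natr_lc n : ((lc n)%:R = (lc_poly int n).[1])%R.
Proof.
rewrite -(children_poly_lc_poly _ (leqnn n)) horner_sum.
rewrite (eq_bigr (fun _ => 1%R)) => [|y _]; last by rewrite hornerXn expr1n.
rewrite sumr_const; congr (_%:R)%R; apply: eq_card => -[P c].
by rewrite !inE linked_cycle_ltn.
Qed.

Lemma lc_rec m : lc m.+2 = (2 * m).+1 * lc m.+1 + lc m.
Proof.
apply/eqP; rewrite -(eqr_nat int) natrD natrM !natr_lc lc_poly_rec.
by rewrite hornerD hornerMn hornerM hornerX mul1r mulr_natl.
Qed.

Theorem theorem4p7 :
  lc 1 = 1 /\ lc 2 = 2 /\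
  (forall n : nat, 3 <= n -> lc n = (2 * n - 3) * lc n.-1 + lc n.-2).
Proof.
have lc0 : lc 0 = 1 by apply/eqP; rewrite -(eqr_nat int) natr_lc hornerC.
have lc1 : lc 1 = 1 by apply/eqP; rewrite -(eqr_nat int) natr_lc lc_poly1 hornerC.
split=> //; split; first by rewrite lc_rec lc1 lc0.
by case=> [|[|[|m]]] // _; rewrite lc_rec !mulnS.
Qed.
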